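(* Let $\rho=|\psi\rangle\langle\psi|$ be an $n$-qubit pure state and $S\subseteq[n]$ non-empty with $s=|S|$. Let $\{p_j,|\phi_j\rangle\}_{j=1}^N$ be a single-qubit projective 2-design. For $\mathbf{q}\in\{1,\dots,N\}^s$ let $|\Phi_{\mathbf{q}}\rangle\langle\Phi_{\mathbf{q}}|=\bigotimes_{i\in S}|\phi_{q_i}\rangle\langle\phi_{q_i}|$ (acting on the qubits in $S$, identity elsewhere), and let $\Phi$ denote the random choice of $\mathbf{q}$ with the $q_i$ independent and each distributed according to $(p_j)_j$. Then $$\mathcal{C}_{|\psi\rangle}(S)=1-3^s\,\mathbb{E}_\Phi\big[\operatorname{tr}(\rho|\Phi\rangle\langle\Phi|)^2\big].$$
   Context: $[n]=\{1,\dots,n\}$ labels the qubits. For an $n$-qubit pure state $|\psi\rangle$ and a non-empty $S\subseteq[n]$ with $s=|S|$, the concentratable entanglement is $\mathcal{C}_{|\psi\rangle}(S)=1-\frac{1}{2^s}\sum_{\alpha\subseteq S}\operatorname{tr}(\rho_\alpha^2)$, where $\rho_\alpha$ is the reduced state of $|\psi\rangle\langle\psi|$ on the qubits in $\alpha$, and $\operatorname{tr}(\rho_\emptyset^2):=1$. A single-qubit projective 2-design is a probability distribution $\{p_j,|\phi_j\rangle\}_{j=1}^N$ over single-qubit pure states such that $\sum_j p_j(|\phi_j\rangle\langle\phi_j|)^{\otimes2}=\int(|\psi\rangle\langle\psi|)^{\otimes 2}\,d\psi$, the integral being over the Haar (unitarily invariant) measure on single-qubit pure states. *)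

From HB Require Import structures.
From mathcomp Require Import all_boot all_order all_algebra.
From mathcomp Require Import all_classical all_reals all_analysis.
From mathcomp Require Import complex.
Set Implicit Arguments. Unset Strict Implicit. Unset Printing Implicit Defensive.
Import Order.TTheory GRing.Theory Num.Theory.
Import numFieldNormedType.Exports.
Local Open Scope ring_scope.

Section QDefs.
Variable R : realType.
Local Notation C := R[i].

(* The unitarily invariant probability measure on single-qubit pure states is
   the normalized area measure on the Bloch sphere:  the state
     |psi(t,p)> = cos(t/2)|0> + e^{ip} sin(t/2)|1>,
   t in [0,pi], p in [0,2pi], with density sin t /(4 pi). *)
Definition bloch_state (t p : R) : bool -> C :=
  fun b => if b then Complex (cos p * sin (t / 2)) (sin p * sin (t / 2))
           else Complex (cos (t / 2)) 0.

Definition bloch_avgR (f : R -> R -> R) : R :=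
  (4 * pi)^-1 *
  \int[@lebesgue_measure R]_(t in `[0, pi]%classic)
     (sin t * \int[@lebesgue_measure R]_(p in `[0, 2 * pi]%classic) f t p).

Definition bloch_avg (g : R -> R -> C) : C :=
  Complex (bloch_avgR (fun t p => complex.Re (g t p)))
          (bloch_avgR (fun t p => complex.Im (g t p))).

(* entry ((a,c),(b,d)) of  \int (|psi><psi|)^{\otimes 2} dpsi  *)
Definition haar_moment2 (a b c d : bool) : C :=
  bloch_avg (fun t p => let v := bloch_state t p in
                        v a * conjc (v b) * v c * conjc (v d)).

Definition is_qubit_pure (phi : bool -> C) : Prop :=
  \sum_(b : bool) phi b * conjc (phi b) = 1.

Definition projective_2design (N : nat) (pr : 'I_N -> R) (phi : 'I_N -> bool -> C)
  : Prop :=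
  (forall j, 0 <= pr j) /\ (\sum_j pr j = 1) /\ (forall j, is_qubit_pure (phi j)) /\
  forall a b c d : bool,
    \sum_j ((pr j)%:C)%C * (phi j a * conjc (phi j b) * phi j c * conjc (phi j d))
    = haar_moment2 a b c d.

Variable n : nat.
(* computational basis of n qubits: bit strings indexed by the qubits 'I_n *)
Definition cfg := {ffun 'I_n -> bool}.

Definition is_pure_state (psi : cfg -> C) : Prop :=
  \sum_(x : cfg) psi x * conjc (psi x) = 1.

Definition dens (psi : cfg -> C) (x y : cfg) : C := psi x * conjc (psi y).

(* bit strings supported on A (used as basis labels for the qubits in A) *)
Definition inside (A : {set 'I_n}) (x : cfg) : bool :=
  [forall i, (i \notin A) ==> ~~ x i].

Definition merge (A : {set 'I_n}) (x z : cfg) : cfg :=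
  [ffun i => if i \in A then x i else z i].

(* reduced state rho_A = tr_{complement of A} rho, entries indexed by
   basis labels of the qubits in A *)
Definition reduced (psi : cfg -> C) (A : {set 'I_n}) (x y : cfg) : C :=
  \sum_(z | inside (~: A) z) dens psi (merge A x z) (merge A y z).

(* tr(rho_A^2), with tr(rho_emptyset^2) := 1 *)
Definition purity (psi : cfg -> C) (A : {set 'I_n}) : C :=
  if A == finset.set0 then 1 else
  \sum_(x | inside A x) \sum_(y | inside A y) reduced psi A x y * reduced psi A y x.

Definition conc_ent (psi : cfg -> C) (S : {set 'I_n}) : C :=
  1 - (2%:R ^+ #|S|)^-1 * \sum_(A : {set 'I_n} | A \subset S) purity psi A.

(* the projector |Phi_q><Phi_q| = (tensor_{i in S} |phi_{q_i}><phi_{q_i}|) (x) Id *)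
Definition subS (S : {set 'I_n}) := {i : 'I_n | i \in S}.

Definition prod_proj (N : nat) (phi : 'I_N -> bool -> C) (S : {set 'I_n})
  (q : {ffun subS S -> 'I_N}) (x y : cfg) : C :=
  (\prod_(i : subS S) (phi (q i) (x (val i)) * conjc (phi (q i) (y (val i)))))
  * ([forall i, (i \notin S) ==> (x i == y i)] : bool)%:R.

Definition trace_prod (A B : cfg -> cfg -> C) : C :=
  \sum_(x : cfg) \sum_(y : cfg) A x y * B y x.

Definition exp_sq_overlap (N : nat) (pr : 'I_N -> R) (phi : 'I_N -> bool -> C)
  (psi : cfg -> C) (S : {set 'I_n}) : C :=
  \sum_(q : {ffun subS S -> 'I_N})
     (\prod_(i : subS S) ((pr (q i))%:C)%C) *
     (trace_prod (dens psi) (prod_proj phi q)) ^+ 2.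

End QDefs.

(* The second moments of a projective 2-design are the Haar ones,
   E[v_a v_b^* v_c v_d^*] = (d_ab d_cd + d_ad d_cb) / 6, which we compute by
   integrating over the Bloch sphere.  Since the q_i are independent, 6^s times
   E[tr(rho Phi)^2] factorizes over the qubits of S into a product of terms
   (Id + SWAP) acting on two copies of rho; expanding the product gives
   sum_(J subset S) tr((rho (x) rho) SWAP_J), and the swap trick identifies
   each term with the purity tr(rho_J^2).  Hence 6^s E[tr(rho Phi)^2] =
   2^s (1 - C(S)), which is the claim since 6^s / 2^s = 3^s. *)
From Pilot Require Import Defs.
From HB Require Import structures.
From mathcomp Require Import all_boot all_order all_algebra.
From mathcomp Require Import all_classical all_reals all_analysis.
From mathcomp Require Import complex ring.
Import Order.TTheory GRing.Theory Num.Theory.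
Import numFieldNormedType.Exports.
(* Re-imported so that Defs.merge shadows path.merge. *)
Import Defs.
Set Implicit Arguments. Unset Strict Implicit. Unset Printing Implicit Defensive.
Local Open Scope ring_scope.

Lemma exchange_big4 (I T : finType) (P : pred I) (V : nmodType)
    (F : I -> T -> T -> T -> T -> V) :
  \sum_(i | P i) \sum_a \sum_b \sum_c \sum_d F i a b c d =
  \sum_a \sum_b \sum_c \sum_d \sum_(i | P i) F i a b c d.
Proof.
rewrite exchange_big; apply: eq_bigr => a _; rewrite exchange_big; apply: eq_bigr => b _.
by rewrite exchange_big; apply: eq_bigr => c _; rewrite exchange_big.
Qed.

Lemma sum_mul_eq2 (T : finType) (K : pzSemiRingType) (G : T -> T -> K) (a b : T) :
  \sum_y \sum_y' G y y' * ((y == a) && (y' == b))%:R = G a b.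
Proof.
rewrite (bigD1 a) //= [X in _ + X]big1 ?addr0; last first.
  by move=> y /negbTE ya; apply: big1 => y' _; rewrite ya mulr0.
rewrite (bigD1 b) //= !eqxx mulr1 [X in _ + X]big1 ?addr0 // => y' /negbTE yb.
by rewrite yb andbF mulr0.
Qed.

Lemma natb_forall (T : finType) (P : pred T) : [forall i, P i] = (\prod_i P i)%N :> nat.
Proof.
have andb_morph : {morph nat_of_bool : a b / a && b >-> (a * b)%N}.
  by move=> a b; rewrite mulnb.
by rewrite -(big_morph _ andb_morph (erefl : nat_of_bool true = 1%N)) big_andE.
Qed.

Section BlochAverage.
Variable R : realType.
Local Notation mu := (@lebesgue_measure R).
Local Notation C := R[i].

Lemma Rintegral_antiderivative (f F : R -> R) (a b : R) : a < b -> continuous f ->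
  (forall x : R, is_derive x (1 : R) F (f x)) ->
  \int[mu]_(x in `[a, b]%classic) f x = F b - F a.
Proof.
move=> ab cf dF.
have Fd x : derivable F x 1 by case: (dF x).
have cF : continuous F.
  by move=> x; apply/differentiable_continuous/derivable1_diffP.
rewrite /Rintegral (continuous_FTC2 (F := F) ab) //.
- by move=> ?; apply: continuous_subspaceT.
- split; first by move=> x _; apply: Fd.
  + exact: cvg_at_right_filter (cF a).
  + exact: cvg_at_left_filter (cF b).
- by move=> x _; rewrite derive1E derive_val.
Qed.

Lemma Rintegral_itv_cst (a b r : R) : a < b ->
  \int[mu]_(x in `[a, b]%classic) r = r * (b - a).
Proof.
move=> ab; have dF x : is_derive x (1 : R) ( *%R r) r.
  by apply: is_derive_eq; rewrite -[_ *: _]/(_ * _) mulr1.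
by rewrite (Rintegral_antiderivative ab (@cst_continuous _ _ r) dF) mulrBr.
Qed.

Lemma sin_int2pi (k : int) : sin (k%:~R * (2 * pi)) = 0 :> R.
Proof.
have sin_nat m : sin (m%:R * (2 * pi)) = 0 :> R.
  by rewrite mulr_natl mulr_natl -[_ *+ m]add0r periodicn ?sin0 //; apply: sinD2pi.
by case: k => m; rewrite ?NegzE ?intrN ?mulNr ?sinN pmulrn sin_nat ?oppr0.
Qed.

Lemma cos_int2pi (k : int) : cos (k%:~R * (2 * pi)) = 1 :> R.
Proof.
have cos_nat m : cos (m%:R * (2 * pi)) = 1 :> R.
  by rewrite mulr_natl mulr_natl -[_ *+ m]add0r periodicn ?cos0 //; apply: cosD2pi.
by case: k => m; rewrite ?NegzE ?intrN ?mulNr ?cosN pmulrn cos_nat.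
Qed.

Lemma pi2_gt0 : 0 < 2 * pi :> R.
Proof. by rewrite mulr_gt0 ?pi_gt0. Qed.

Lemma Rintegral_cos_int (c : R) (k : int) :
  \int[mu]_(p in `[0, 2 * pi]%classic) (c * cos (k%:~R * p)) =
  if k == 0 then c * (2 * pi) else 0.
Proof.
have cont : continuous (fun p : R => c * cos (k%:~R * p)).
  by move=> x; apply/differentiable_continuous/derivable1_diffP.
have [k0|k0] := eqVneq k 0.
  have dF x : is_derive x (1 : R) ( *%R c) (c * cos (k%:~R * x)).
    by apply: is_derive_eq; rewrite k0 mul0r cos0 -[_ *: _]/(_ * _).
  by rewrite (Rintegral_antiderivative pi2_gt0 cont dF) mulr0 subr0.
have k0R : k%:~R != 0 :> R by rewrite intr_eq0.
have dF x : is_derive x (1 : R) (fun p => c * sin (k%:~R * p) / k%:~R)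
                                (c * cos (k%:~R * x)).
  by apply: is_derive_eq; rewrite -![_ *: _]/(_ * _); field.
rewrite (Rintegral_antiderivative pi2_gt0 cont dF).
by rewrite sin_int2pi !(mulr0, sin0, mul0r) subrr.
Qed.

Lemma Rintegral_sin_int (c : R) (k : int) :
  \int[mu]_(p in `[0, 2 * pi]%classic) (c * sin (k%:~R * p)) = 0.
Proof.
have cont : continuous (fun p : R => c * sin (k%:~R * p)).
  by move=> x; apply/differentiable_continuous/derivable1_diffP.
have [k0|k0] := eqVneq k 0.
  have dF x : is_derive x (1 : R) (fun=> 0) (c * sin (k%:~R * x)).
    by apply: is_derive_eq; rewrite k0 mul0r sin0 mulr0.
  by rewrite (Rintegral_antiderivative pi2_gt0 cont dF) subrr.
have k0R : k%:~R != 0 :> R by rewrite intr_eq0.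
have dF x : is_derive x (1 : R) (fun p => - c * cos (k%:~R * p) / k%:~R)
                                (c * sin (k%:~R * x)).
  by apply: is_derive_eq; rewrite -![_ *: _]/(_ * _); field.
by rewrite (Rintegral_antiderivative pi2_gt0 cont dF) cos_int2pi mulr0 cos0 subrr.
Qed.

Local Open Scope complex_scope.

Definition cis (x : R) : C := Complex (cos x) (sin x).

Lemma cisD x y : cis (x + y) = cis x * cis y.
Proof.
by apply/eqP; rewrite eq_complex /= cosD sinD; apply/andP; split; apply/eqP; ring.
Qed.

Lemma conjc_realC_cis (w x : R) : ((w%:C * cis x)^*)%C = w%:C * cis (- x).
Proof.
by apply/eqP; rewrite eq_complex /= cosN sinN; apply/andP; split; apply/eqP; ring.
Qed.

Lemma bloch_avg_cis (w : R -> R) (k : int) :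
  bloch_avg (fun t p => (w t)%:C * cis (k%:~R * p)) =
  if k == 0 then (bloch_avgR (fun t _ => w t))%:C else 0.
Proof.
rewrite /bloch_avg.
have -> : (fun t p => complex.Re ((w t)%:C * cis (k%:~R * p))) =
          (fun t p => w t * cos (k%:~R * p)).
  by apply/funext => t; apply/funext => p; rewrite /= mul0r subr0.
have -> : (fun t p => complex.Im ((w t)%:C * cis (k%:~R * p))) =
          (fun t p => w t * sin (k%:~R * p)).
  by apply/funext => t; apply/funext => p; rewrite /= mul0r addr0.
rewrite /bloch_avgR [X in _ +i* (_ * X)](eq_Rintegral _ (g := fun=> 0)); last first.
  by move=> t _; rewrite Rintegral_sin_int mulr0.
rewrite Rintegral_itv_cst ?pi_gt0 // mul0r mulr0.
have [k0|k0] := eqVneq k 0.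
  congr (_ * _ +i* 0); apply: eq_Rintegral => t _.
  by rewrite Rintegral_cos_int k0 eqxx Rintegral_itv_cst ?pi2_gt0 // subr0.
rewrite (eq_Rintegral _ (g := fun=> 0)); last first.
  by move=> t _; rewrite Rintegral_cos_int (negbTE k0) mulr0.
by rewrite Rintegral_itv_cst ?pi_gt0 // mul0r mulr0.
Qed.

(* Archimedes: cos t is uniformly distributed on [-1, 1] under the Haar measure. *)
Lemma bloch_avgR_zonal (P Q : R -> R) : continuous P ->
  (forall u : R, is_derive u (1 : R) Q (P u)) ->
  bloch_avgR (fun t _ => P (cos t)) = (Q 1 - Q (-1)) / 2.
Proof.
move=> cP dQ; rewrite /bloch_avgR.
rewrite (eq_Rintegral mu (g := fun t : R => sin t * P (cos t) * (2 * pi))); last first.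
  by move=> t _; rewrite Rintegral_itv_cst ?pi2_gt0 // subr0 mulrA.
have cont : continuous ((sin \* (P \o cos)) \* cst (2 * pi)).
  move=> t; apply: continuousM; last exact: cst_continuous.
  apply: continuousM; first exact: continuous_sin.
  by apply: continuous_comp; [exact: continuous_cos | exact: cP].
have dF t : is_derive t (1 : R) (fun t => (Q \o cos) t * - (2 * pi))
                                (sin t * P (cos t) * (2 * pi)).
  have dQc := is_derive1_comp (dQ (cos t)) (is_derive_cos t).
  by apply: is_derive_eq; rewrite -![_ *: _]/(_ * _); ring.
rewrite (Rintegral_antiderivative (pi_gt0 R) cont dF) /= cospi cos0.
by move: pi (pi_gt0 R) => q /lt0r_neq0 q0; field.
Qed.

Definition amp (t : R) (b : bool) : R := if b then sin (t / 2) else cos (t / 2).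

Lemma bloch_stateE t p b : bloch_state t p b = (amp t b)%:C * cis (b%:R * p).
Proof.
by case: b; apply/eqP; rewrite eq_complex /= ?mul1r ?mul0r ?cos0 ?sin0;
  apply/andP; split; apply/eqP; ring.
Qed.

Lemma amp_sqr t b : amp t b ^+ 2 = (1 + (-1) ^+ b * cos t) / 2.
Proof.
have -> : cos t = cos (t / 2) ^+ 2 *+ 2 - 1 by rewrite -cos_mulr2n mulr2n -splitr.
by case: b; rewrite /amp ?sin2cos2 /=; field.
Qed.

Lemma bloch_avgR_cos_quadratic (s s' : R) :
  bloch_avgR (fun t _ => (1 + s * cos t) * (1 + s' * cos t) / 4) = (3 + s * s') / 12.
Proof.
pose P u : R := (1 + s * u) * (1 + s' * u) / 4.
pose Q u : R := u / 4 + (s + s') * u ^+ 2 / 8 + s * s' * u ^+ 3 / 12.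
have cP : continuous P.
  by move=> u; apply/differentiable_continuous/derivable1_diffP.
have dQ u : is_derive u (1 : R) Q (P u).
  by apply: is_derive_eq; rewrite -![_ *: _]/(_ * _) /P; field.
by rewrite (bloch_avgR_zonal cP dQ) /Q; field.
Qed.

Lemma bloch_avgR_amp_sqr (b c : bool) :
  bloch_avgR (fun t _ => amp t b ^+ 2 * amp t c ^+ 2) = (1 + (b == c)%:R) / 6.
Proof.
have -> : (fun t (_ : R) => amp t b ^+ 2 * amp t c ^+ 2) =
          (fun t _ => (1 + (-1) ^+ b * cos t) * (1 + (-1) ^+ c * cos t) / 4).
  apply/funext => t; apply/funext => _; rewrite !amp_sqr.
  by move: ((-1) ^+ b) ((-1) ^+ c) => x y; field.
by rewrite bloch_avgR_cos_quadratic; case: b; case: c => /=; field.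
Qed.

Lemma bloch_avgR_amp4 (a b c d : bool) : (a + c = b + d)%N ->
  bloch_avgR (fun t _ => amp t a * amp t b * amp t c * amp t d) =
  (((a == b) && (c == d)) + ((a == d) && (c == b)))%N%:R / 6.
Proof.
move=> acbd; transitivity (bloch_avgR (fun t _ => amp t a ^+ 2 * amp t c ^+ 2)).
  congr bloch_avgR; apply/funext => t; apply/funext => _.
  by case: a b c d acbd => [] [] [] [] //= _; ring.
rewrite bloch_avgR_amp_sqr.
by case: a b c d acbd => [] [] [] [] //= _; rewrite natrD ?mulr0n ?mulr1n ?addr0 ?add0r.
Qed.

Lemma haar_moment2E (a b c d : bool) :
  haar_moment2 R a b c d =
  ((((a == b) && (c == d)) + ((a == d) && (c == b)))%N%:R / 6)%:C.
Proof.
rewrite /haar_moment2 (_ : (fun t p => _) = fun t p =>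
    (amp t a * amp t b * amp t c * amp t d)%:C * cis (((a + c)%:Z - (b + d)%:Z)%:~R * p)).
  rewrite bloch_avg_cis subr_eq0 eqz_nat; case: eqP => [|acbd].
    by move=> /bloch_avgR_amp4 ->.
  by case: a b c d acbd => [] [] [] [] //= _; rewrite mul0r.
apply/funext => t; apply/funext => p; rewrite /= !bloch_stateE !conjc_realC_cis.
rewrite intrB -!pmulrn !natrD !mulrBl !mulrDl opprD !cisD !rmorphM.
by rewrite /=; ring.
Qed.

End BlochAverage.

Section SwapTrick.
Variables (R : realType) (n : nat).
Local Notation C := R[i].
Local Notation cfg := (cfg n).

Lemma merge_merge (J : {set 'I_n}) (a b c d : cfg) :
  merge J (merge J a b) (merge J c d) = merge J a d.
Proof. by apply/ffunP => i; rewrite !ffunE; case: (i \in J). Qed.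

Lemma merge0 (a b : cfg) : merge finset.set0 a b = b.
Proof. by apply/ffunP => i; rewrite ffunE inE. Qed.

Lemma eq_merge2 (J : {set 'I_n}) (x y x' y' : cfg) :
  (y == merge J x' x) && (y' == merge J x x') =
  [forall i, if i \in J then (y i == x' i) && (y' i == x i)
             else (y i == x i) && (y' i == x' i)].
Proof.
apply/andP/forallP => [[/eqP-> /eqP->] i|yx].
  by rewrite !ffunE; case: (i \in J); rewrite !eqxx.
split; apply/eqP/ffunP => i; rewrite ffunE; have := yx i;
  by case: (i \in J) => /andP[/eqP ? /eqP ?].
Qed.

Lemma swap_expansion (S : {set 'I_n}) (x y x' y' : cfg) :
  ([forall i, (i \notin S) ==> (y i == x i)] * [forall i, (i \notin S) ==> (y' i == x' i)] *
   \prod_(i in S) (((y i == x i) && (y' i == x' i)) + ((y i == x' i) && (y' i == x i))))%N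
  = (\sum_(J : {set 'I_n} | J \subset S) ((y == merge J x' x) && (y' == merge J x x')))%N.
Proof.
rewrite !natb_forall [(\prod_(i in S) _)%N]big_mkcond -!big_split /=.
rewrite (eq_bigr (fun i => (i \in S) && (y i == x' i) && (y' i == x i) +
                           (y i == x i) && (y' i == x' i)))%N; last first.
  by move=> i _; case: (i \in S); rewrite /= ?mulnb ?mul1n ?muln1 ?add0n // addnC.
rewrite bigA_distr (bigID (fun J : {set 'I_n} => J \subset S)) /=.
rewrite [X in (_ + X)%N]big1 ?addn0; last first.
  by move=> J /subsetPn[i iJ /negbTE iS]; rewrite (bigD1 i) //= iJ iS.
apply: eq_big => [J|J JS]; first by [].
rewrite eq_merge2 natb_forall; apply: eq_bigr => i _.
by case: ifP => // /(fintype.subsetP JS) ->.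
Qed.

Definition restrict (A : {set 'I_n}) (x : cfg) : cfg := [ffun i => (i \in A) && x i].

Lemma sum_cfg_merge (V : nmodType) (A : {set 'I_n}) (f : cfg -> V) :
  \sum_x f x = \sum_(u | inside A u) \sum_(z | inside (~: A) z) f (merge A u z).
Proof.
rewrite pair_big_dep (reindex (fun x => (restrict A x, restrict (~: A) x))) /=.
  apply: eq_big => x.
    by apply/esym/andP; split; apply/forallP => i; rewrite ffunE ?inE; case: (i \in A).
  by move=> _; congr f; apply/ffunP => i; rewrite !ffunE inE; case: (i \in A).
exists (fun p => merge A p.1 p.2).
  by move=> x _; apply/ffunP => i; rewrite !ffunE inE; case: (i \in A).
case=> u z /andP[/forallP uA /forallP zA] /=; congr pair; apply/ffunP => i;
  rewrite !ffunE ?inE; case iA: (i \in A) => //=.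
- by have := uA i; rewrite iA => /negbTE.
- by have := zA i; rewrite inE iA => /negbTE.
Qed.

(* tr((rho (x) rho) SWAP_J), where SWAP_J exchanges the qubits of J between
   the two copies. *)
Definition swap_trace (psi : cfg -> C) (J : {set 'I_n}) : C :=
  \sum_(x : cfg) \sum_(x' : cfg)
     psi x * conjc (psi (merge J x' x)) * psi x' * conjc (psi (merge J x x')).

Lemma purity_swap_trace (psi : cfg -> C) (J : {set 'I_n}) :
  is_pure_state psi -> purity psi J = swap_trace psi J.
Proof.
move=> pure; rewrite /purity /swap_trace; case: eqP => [->|_].
  transitivity (\sum_(x : cfg) \sum_(x' : cfg)
                  (psi x * conjc (psi x)) * (psi x' * conjc (psi x'))).
    by rewrite -big_distrlr /= pure mulr1.
  by apply: eq_bigr => x _; apply: eq_bigr => x' _; rewrite !merge0 !mulrA.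
apply/esym; rewrite (sum_cfg_merge J).
under eq_bigr => u _ do under eq_bigr => z _ do rewrite (sum_cfg_merge J).
apply: eq_bigr => u _; rewrite exchange_big /=; apply: eq_bigr => v _.
rewrite /reduced big_distrlr /=; apply: eq_bigr => z _; apply: eq_bigr => z' _.
by rewrite !merge_merge /dens; ring.
Qed.

Lemma mulr_trace_prod_sqr (c : C) (A B : cfg -> cfg -> C) :
  c * trace_prod A B ^+ 2 =
  \sum_x \sum_x' \sum_y \sum_y' c * (A x y * B y x * (A x' y' * B y' x')).
Proof.
rewrite /trace_prod expr2 big_distrlr mulr_sumr; apply: eq_bigr => x _.
rewrite mulr_sumr; apply: eq_bigr => x' _; rewrite big_distrlr mulr_sumr.
by apply: eq_bigr => y _; rewrite mulr_sumr.
Qed.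

End SwapTrick.

Section SecondMoment.
Variables (R : realType) (n N : nat) (pr : 'I_N -> R) (phi : 'I_N -> bool -> R[i]).
Local Notation C := R[i].
Local Notation cfg := (cfg n).
Local Open Scope complex_scope.

Hypothesis moment2 : forall a b c d : bool,
  \sum_j (pr j)%:C * (phi j a * conjc (phi j b) * phi j c * conjc (phi j d)) =
  ((((a == b) && (c == d)) + ((a == d) && (c == b)))%N%:R / 6)%:C.

Lemma expect_prod_proj2 (S : {set 'I_n}) (x y x' y' : cfg) :
  6%:R ^+ #|S| * \sum_(q : {ffun subS S -> 'I_N})
     (\prod_i (pr (q i))%:C) * (prod_proj phi q y x * prod_proj phi q y' x') =
  \sum_(J : {set 'I_n} | J \subset S) ((y == merge J x' x) && (y' == merge J x x'))%:R.
Proof.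
set off := ([forall i, (i \notin S) ==> (y i == x i)] *
            [forall i, (i \notin S) ==> (y' i == x' i)])%N.
pose swap i := (((y i == x i) && (y' i == x' i)) + ((y i == x' i) && (y' i == x i)))%N.
have -> : \sum_(q : {ffun subS S -> 'I_N})
     (\prod_i (pr (q i))%:C) * (prod_proj phi q y x * prod_proj phi q y' x') =
    off%:R * \prod_(i in S) ((swap i)%:R / 6)%:C.
  apply/esym; rewrite (big_sub S (fun i => ((swap i)%:R / 6)%:C)).
  under eq_bigr => i _ do rewrite /swap -moment2.
  rewrite bigA_distr_bigA /= mulr_sumr; apply: eq_bigr => q _.
  rewrite /prod_proj /off natrM (eq_bigr (fun i => (pr (q i))%:C *
    ((phi (q i) (y (val i)) * conjc (phi (q i) (x (val i)))) *
     (phi (q i) (y' (val i)) * conjc (phi (q i) (x' (val i))))))); last first.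
    by move=> i _; rewrite !mulrA.
  by rewrite !big_split /=; ring.
rewrite -natr_sum -swap_expansion -/off natrM natr_prod.
under eq_bigr => i _ do rewrite rmorphM /= fmorphV /= !rmorph_nat.
by rewrite big_split /= prodr_const exprVn mulrCA [6 ^+ _ * _]mulrCA mulfV ?mulr1 //.
Qed.

Lemma exp_sq_overlap_swap_trace (psi : cfg -> C) (S : {set 'I_n}) :
  6%:R ^+ #|S| * exp_sq_overlap pr phi psi S =
  \sum_(J : {set 'I_n} | J \subset S) swap_trace psi J.
Proof.
rewrite /exp_sq_overlap mulr_sumr.
under eq_bigr => q _ do rewrite mulrA mulr_trace_prod_sqr.
rewrite exchange_big4.
transitivity (\sum_x \sum_x' \sum_y \sum_y' \sum_(J : {set 'I_n} | J \subset S)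
  dens psi x y * dens psi x' y' * ((y == merge J x' x) && (y' == merge J x x'))%:R).
  do 4!apply: eq_bigr => ? _.
  by rewrite -mulr_sumr -expect_prod_proj2 !mulr_sumr; apply: eq_bigr => q _; ring.
rewrite -exchange_big4; apply: eq_bigr => J _; apply: eq_bigr => x _; apply: eq_bigr => x' _.
by rewrite sum_mul_eq2 /dens !mulrA.
Qed.

End SecondMoment.

Theorem theorem3 (R : realType) (n : nat) (psi : cfg n -> R[i])
  (S : {set 'I_n}) (N : nat) (pr : 'I_N -> R) (phi : 'I_N -> bool -> R[i]) :
  is_pure_state psi -> S != finset.set0 -> projective_2design pr phi ->
  conc_ent psi S = 1 - 3%:R ^+ #|S| * exp_sq_overlap pr phi psi S.
Proof.
move=> pure _ [_ [_ [_ design]]].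
have moment2 a b c d := etrans (design a b c d) (haar_moment2E R a b c d).
rewrite /conc_ent (eq_bigr _ (fun J _ => purity_swap_trace J pure)).
rewrite -(exp_sq_overlap_swap_trace moment2) mulrA -exprVn -exprMn.
by rewrite (_ : 2%:R^-1 * 6%:R = 3%:R :> R[i]) //; field.
Qed.
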